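(* Let $\{x^k\}$ be generated by the MPG algorithm described in the context, and suppose that for each $j=1,\ldots,m$ the gradient $\nabla G_j$ is Lipschitz continuous with constant $L_j>0$. Then for every $k$ at which the step size $t_k$ is computed, $t_k\ge t_{\min}:=\min\{1,\tau_1\gamma/L_{\max}\}$, where $L_{\max}:=\max_{j=1,\ldots,m}L_j$.
   Context: Let $F:\mathbb{R}^n\to(\mathbb{R}\cup\{+\infty\})^m$, $F=(F_1,\ldots,F_m)$, with $F_j=G_j+H_j$ for $j=1,\ldots,m$, where: (i) each $G_j:\mathbb{R}^n\to\mathbb{R}$ is continuously differentiable and convex; (ii) each $H_j:\mathbb{R}^n\to\mathbb{R}\cup\{+\infty\}$ is proper, convex and continuous on its domain; (iii) $\mathrm{dom}(F):=\{x: F_j(x)<+\infty\ \forall j\}$ is nonempty and closed. For $u,v\in\mathbb{R}^m$, $u\preceq v$ means $u_j\le v_j$ for all $j$. For $x\in\mathrm{dom}(F)$ and $\alpha>0$ define $\psi_x(u):=\max_{j=1,\ldots,m}\big(\nabla G_j(x)^\top(u-x)+H_j(u)-H_j(x)\big)$, $p_\alpha(x):=\arg\min_{u\in\mathbb{R}^n}\psi_x(u)+\frac{1}{2\alpha}\|u-x\|^2$ (unique minimizer), and $\theta_\alpha(x):=\psi_x(p_\alpha(x))+\frac{1}{2\alpha}\|p_\alpha(x)-x\|^2$. MPG algorithm. Step 0: choose $x^0\in\mathrm{dom}(F)$, $\alpha>0$, $\gamma\in(0,2/\alpha)$, $0<\tau_1<\tau_2<1$; set $k=0$. Step 1: compute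 $p^k:=p_\alpha(x^k)$ and $\theta_\alpha(x^k)$. Step 2: if $\theta_\alpha(x^k)=0$, stop. Step 3: set $d^k:=p^k-x^k$, take $j_k^*\in\arg\max_{j}\nabla G_j(x^k)^\top d^k$, set $t=1$. Step 3.1: if $G_{j_k^*}(x^k+td^k)\le G_{j_k^*}(x^k)+t\nabla G_{j_k^*}(x^k)^\top d^k+t\frac{\gamma}{2}\|d^k\|^2$, go to Step 3.2; otherwise replace $t$ by some value in $[\tau_1 t,\tau_2 t]$ and repeat Step 3.1. Step 3.2: if $F(x^k+td^k)\preceq F(x^k)$, set $t_k=t$ and go to Step 4. Step 3.3: replace $t$ by some value in $[\tau_1 t,\tau_2 t]$; if $G_j(x^k+td^k)\le G_j(x^k)+t\nabla G_j(x^k)^\top d^k+t\frac{\gamma}{2}\|d^k\|^2$ for all $j=1,\ldots,m$, set $t_k=t$ and go to Step 4; otherwise repeat Step 3.3. Step 4: $x^{k+1}:=x^k+t_kd^k$, $k\leftarrow k+1$, go to Step 1. *)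

From HB Require Import structures.
From mathcomp Require Import all_boot all_order all_algebra.
From mathcomp Require Import all_classical all_reals all_analysis.
Set Implicit Arguments.
Unset Strict Implicit.
Unset Printing Implicit Defensive.
Import Order.TTheory GRing.Theory Num.Theory.
Import numFieldNormedType.Exports.
Local Open Scope ring_scope.
Local Open Scope classical_set_scope.

Definition dotv {R : realType} {n : nat} (u v : 'rV[R]_n) : R :=
  \sum_(i < n) u ord0 i * v ord0 i.
Definition sqnorm {R : realType} {n : nat} (u : 'rV[R]_n) : R := dotv u u.
Definition enorm {R : realType} {n : nat} (u : 'rV[R]_n) : R :=
  Num.sqrt (sqnorm u).

Definition is_gradient {R : realType} {n : nat}
  (f : 'rV[R]_n -> R) (g : 'rV[R]_n -> 'rV[R]_n) : Prop :=
  forall x, differentiable f x /\ forall v, 'd f x v = dotv (g x) v.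

Definition convex_real {R : realType} {n : nat} (f : 'rV[R]_n -> R) : Prop :=
  forall x y (l : R), 0 <= l <= 1 ->
    f (l *: x + (1 - l) *: y) <= l * f x + (1 - l) * f y.

Definition domE {R : realType} {n : nat} (h : 'rV[R]_n -> \bar R) : set 'rV[R]_n :=
  [set x | (h x < +oo)%E].

Definition proper_ext {R : realType} {n : nat} (h : 'rV[R]_n -> \bar R) : Prop :=
  (exists x, (h x < +oo)%E) /\ (forall x, (-oo < h x)%E).

(* convexity of an extended-valued function (points outside the domain give
   a right-hand side +oo, hence only domain points need to be checked) *)
Definition convex_ext {R : realType} {n : nat} (h : 'rV[R]_n -> \bar R) : Prop :=
  forall x y (l : R), domE h x -> domE h y -> 0 <= l <= 1 ->
    (h (l *: x + (1 - l) *: y)%R <= (l * fine (h x) + (1 - l) * fine (h y))%:E)%E.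

Definition continuous_on_dom {R : realType} {n : nat} (h : 'rV[R]_n -> \bar R) : Prop :=
  {within domE h, continuous (fun x => fine (h x))}.

Definition lipschitz_grad {R : realType} {n : nat}
  (g : 'rV[R]_n -> 'rV[R]_n) (L : R) : Prop :=
  forall x y, enorm (g x - g y) <= L * enorm (x - y).

Definition Fj {R : realType} {n m : nat} (G : 'I_m -> 'rV[R]_n -> R)
  (H : 'I_m -> 'rV[R]_n -> \bar R) (j : 'I_m) (x : 'rV[R]_n) : \bar R :=
  ((G j x)%:E + H j x)%E.

Definition domF {R : realType} {n m : nat} (H : 'I_m -> 'rV[R]_n -> \bar R)
  : set 'rV[R]_n := [set x | forall j, (H j x < +oo)%E].

Definition F_le {R : realType} {n m : nat} (G : 'I_m -> 'rV[R]_n -> R)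
  (H : 'I_m -> 'rV[R]_n -> \bar R) (y x : 'rV[R]_n) : Prop :=
  forall j, (Fj G H j y <= Fj G H j x)%E.

Definition composite_setting {R : realType} {n m : nat}
  (G : 'I_m -> 'rV[R]_n -> R) (gradG : 'I_m -> 'rV[R]_n -> 'rV[R]_n)
  (H : 'I_m -> 'rV[R]_n -> \bar R) : Prop :=
  [/\ forall j, is_gradient (G j) (gradG j) /\ continuous (gradG j)
                /\ convex_real (G j),
      forall j, proper_ext (H j) /\ convex_ext (H j) /\ continuous_on_dom (H j),
      domF H !=set0 & closed (domF H)].

Definition psi {R : realType} {n m : nat}
  (gradG : 'I_m -> 'rV[R]_n -> 'rV[R]_n) (H : 'I_m -> 'rV[R]_n -> \bar R)
  (x u : 'rV[R]_n) : \bar R :=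
  \big[maxe/-oo%E]_(j < m) ((dotv (gradG j x) (u - x))%:E + H j u - H j x)%E.

Definition prox_obj {R : realType} {n m : nat}
  (gradG : 'I_m -> 'rV[R]_n -> 'rV[R]_n) (H : 'I_m -> 'rV[R]_n -> \bar R)
  (alpha : R) (x u : 'rV[R]_n) : \bar R :=
  (psi gradG H x u + (sqnorm (u - x) / (2 * alpha))%:E)%E.

Definition is_prox {R : realType} {n m : nat}
  (gradG : 'I_m -> 'rV[R]_n -> 'rV[R]_n) (H : 'I_m -> 'rV[R]_n -> \bar R)
  (alpha : R) (x p : 'rV[R]_n) : Prop :=
  forall u, (prox_obj gradG H alpha x p <= prox_obj gradG H alpha x u)%E.

Definition theta {R : realType} {n m : nat}
  (gradG : 'I_m -> 'rV[R]_n -> 'rV[R]_n) (H : 'I_m -> 'rV[R]_n -> \bar R)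
  (alpha : R) (x p : 'rV[R]_n) : \bar R := prox_obj gradG H alpha x p.

Section LineSearch.
Variables (R : realType) (c desc call : R -> Prop) (tau1 tau2 : R).
(* c t    : Armijo-type test of Step 3.1 for j_k^*
   desc t : F(x^k + t d^k) ⪯ F(x^k)   (Step 3.2)
   call t : Armijo-type test of Step 3.3 for all j *)

(* values of t at which Step 3.1 is (re)executed *)
Inductive ls_step31 : R -> Prop :=
| ls31_init : ls_step31 1
| ls31_back t t' : ls_step31 t -> ~ c t -> tau1 * t <= t' <= tau2 * t ->
    ls_step31 t'.

(* values of t held when Step 3.3 is (re)entered, before the replacement *)
Inductive ls_step33 : R -> Prop :=
| ls33_init t : ls_step31 t -> c t -> ~ desc t -> ls_step33 t
| ls33_back t t' : ls_step33 t -> tau1 * t <= t' <= tau2 * t -> ~ call t' ->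
    ls_step33 t'.

(* possible outputs t_k of Step 3 *)
Inductive ls_result : R -> Prop :=
| lsr_32 t : ls_step31 t -> c t -> desc t -> ls_result t
| lsr_33 t t' : ls_step33 t -> tau1 * t <= t' <= tau2 * t -> call t' ->
    ls_result t'.
End LineSearch.

Definition armijo {R : realType} {n m : nat}
  (G : 'I_m -> 'rV[R]_n -> R) (gradG : 'I_m -> 'rV[R]_n -> 'rV[R]_n)
  (gamma : R) (j : 'I_m) (x d : 'rV[R]_n) (t : R) : Prop :=
  G j (x + t *: d) <= G j x + t * dotv (gradG j x) d + t * (gamma / 2) * sqnorm d.

(* iteration k is reached iff the algorithm has not stopped at any i < k *)
Definition reached {R : realType} {n m : nat}
  (gradG : 'I_m -> 'rV[R]_n -> 'rV[R]_n) (H : 'I_m -> 'rV[R]_n -> \bar R)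
  (alpha : R) (x p : nat -> 'rV[R]_n) (k : nat) : Prop :=
  forall i, (i < k)%N -> theta gradG H alpha (x i) (p i) <> 0%E.

Definition MPG_sequence {R : realType} {n m : nat}
  (G : 'I_m -> 'rV[R]_n -> R) (gradG : 'I_m -> 'rV[R]_n -> 'rV[R]_n)
  (H : 'I_m -> 'rV[R]_n -> \bar R) (alpha gamma tau1 tau2 : R)
  (x p : nat -> 'rV[R]_n) (t : nat -> R) (jstar : nat -> 'I_m) : Prop :=
  [/\
      domF H (x 0%N), 0 < alpha, 0 < gamma < 2 / alpha & (0 < tau1) && (tau1 < tau2 < 1)]
  /\ forall k, reached gradG H alpha x p k ->
     is_prox gradG H alpha (x k) (p k) /\
     (* Steps 2-4 when the algorithm does not stop *)
     (theta gradG H alpha (x k) (p k) <> 0%E ->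
      let d := p k - x k in
      [/\ forall j, dotv (gradG j (x k)) d <= dotv (gradG (jstar k) (x k)) d,
          ls_result (armijo G gradG gamma (jstar k) (x k) d)
                    (fun s => F_le G H (x k + s *: d) (x k))
                    (fun s => forall j, armijo G gradG gamma j (x k) d s)
                    tau1 tau2 (t k)
        & x k.+1 = x k + t k *: d]).

Definition Lmax {R : realType} {m : nat} (L : 'I_m -> R) : R :=
  \big[Num.max/0]_(j < m) L j.

From HB Require Import structures.
From mathcomp Require Import all_boot all_order all_algebra.
From mathcomp Require Import all_classical all_reals all_analysis.
From mathcomp Require Import ring lra.
Import Order.TTheory GRing.Theory Num.Theory.
Import numFieldNormedType.Exports.
Local Open Scope ring_scope.

(* With b := gamma / Lmax, the descent lemma
   G_j (x + s d) <= G_j x + s <grad G_j x, d> + L_j s^2 |d|^2 / 2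
   makes every Armijo test of Step 3 pass for 0 < s <= b.  Comparing the
   proximal point p with x + r d (0 <= r < 1), along which psi_x is convex
   with psi_x(x) <= 0, gives psi_x(p) <= -(1 + r) |d|^2 / (2 alpha); as
   gamma alpha < 2 this yields <grad G_j x, d> + H_j p - H_j x + gamma |d|^2 / 2
   <= 0, so passing all Armijo tests at some s in (0, 1] forces
   F(x + s d) <= F(x).  Hence Step 3.3 is entered only with t > b, and
   backtracking from t > b never goes below tau1 b; Step 3.1 starts at 1 and
   also backtracks only from t > b.  The iterates stay in dom F since
   x^(k+1) lies on the segment [x^k, p^k]. *)

Section EuclideanGeometry.
Context {R : realType} {n : nat}.
Implicit Types (u v w : 'rV[R]_n) (r : R).

Lemma dotvBl u v w : dotv (u - v) w = dotv u w - dotv v w.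
Proof. by rewrite /dotv -sumrB; apply: eq_bigr => i _; rewrite !mxE mulrBl. Qed.

Lemma dotvZl r u w : dotv (r *: u) w = r * dotv u w.
Proof. by rewrite /dotv mulr_sumr; apply: eq_bigr => i _; rewrite !mxE mulrA. Qed.

Lemma dotvZr r u w : dotv u (r *: w) = r * dotv u w.
Proof. by rewrite /dotv mulr_sumr; apply: eq_bigr => i _; rewrite !mxE mulrCA. Qed.

Lemma dotv0r u : dotv u 0 = 0.
Proof. by rewrite /dotv big1 // => i _; rewrite mxE mulr0. Qed.

Lemma sqnorm_ge0 u : 0 <= sqnorm u.
Proof. by rewrite /sqnorm /dotv sumr_ge0 // => i _; rewrite -expr2 sqr_ge0. Qed.

Lemma sqnormZ r u : sqnorm (r *: u) = r ^+ 2 * sqnorm u.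
Proof. by rewrite /sqnorm dotvZl dotvZr mulrA expr2. Qed.

Lemma enorm_ge0 u : 0 <= enorm u.
Proof. exact: sqrtr_ge0. Qed.

Lemma sqr_enorm u : enorm u ^+ 2 = sqnorm u.
Proof. by rewrite /enorm sqr_sqrtr // sqnorm_ge0. Qed.

Lemma dotv_le_sqnorm (c : R) u v :
  0 < c -> sqnorm u <= c ^+ 2 * sqnorm v -> dotv u v <= c * sqnorm v.
Proof.
move=> c0 uv.
have amgm : 2 * c * dotv u v <= sqnorm u + c ^+ 2 * sqnorm v.
  rewrite /sqnorm /dotv !mulr_sumr -big_split /=; apply: ler_sum => i _.
  have := sqr_ge0 (u ord0 i - c * v ord0 i); nra.
nra.
Qed.

Lemma lipschitz_grad_sqnorm {g : 'rV[R]_n -> 'rV[R]_n} {L : R} :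
  lipschitz_grad g L -> forall u v, sqnorm (g u - g v) <= L ^+ 2 * sqnorm (u - v).
Proof.
move=> g_lip u v; have Lg := g_lip u v; rewrite -!sqr_enorm -exprMn.
by rewrite ler_sqr ?nnegrE ?enorm_ge0 // (le_trans (enorm_ge0 _) Lg).
Qed.

End EuclideanGeometry.

Lemma is_derive_line {R : realType} {V W : normedModType R} (f : V -> W)
  (a v : V) (s : R) : derivable f (a + s *: v) v ->
  is_derive s 1 (fun r => f (a + r *: v)) ('D_v f (a + s *: v)).
Proof.
move=> df.
have quotientE : forall h : R,
    f (a + (h *: 1 + s) *: v) = (f \o shift (a + s *: v)) (h *: v).
  by move=> h; rewrite /= -[h%:A]/(h * 1) mulr1 scalerDl addrCA.
split; rewrite /derivable /derive; set q := fun h => h^-1 *: _;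
  suff -> : q = (fun h : R =>
                   h^-1 *: ((f \o shift (a + s *: v)) (h *: v) - f (a + s *: v))) by [].
all: by apply: funext => h; rewrite /q /= quotientE.
Qed.

Section DescentLemma.
Context {R : realType} {n : nat}.
Context {G : 'rV[R]_n -> R} {g : 'rV[R]_n -> 'rV[R]_n} {L : R}.
Hypotheses (G_grad : is_gradient G g) (L_gt0 : 0 < L) (g_lip : lipschitz_grad g L).

Lemma is_derive_gradient_line (x d : 'rV[R]_n) (s : R) :
  is_derive s 1 (fun r => G (x + r *: d)) (dotv (g (x + s *: d)) d).
Proof.
have [dG dGE] := G_grad (x + s *: d).
by rewrite -dGE -deriveE //; apply: is_derive_line; apply: diff_derivable.
Qed.

Lemma descent_lemma (x d : 'rV[R]_n) (t : R) : 0 <= t ->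
  G (x + t *: d) <= G x + t * dotv (g x) d + L / 2 * t ^+ 2 * sqnorm d.
Proof.
move=> t_ge0; set c := dotv (g x) d; set K := L / 2 * sqnorm d.
pose f := (fun r => G (x + r *: d)) - c *: id - K *: (id ^+ 2).
have df (r : R) : is_derive r 1 f (dotv (g (x + r *: d)) d - c * 1 - K * (2 * r)).
  have G_line := is_derive_gradient_line x d r.
  apply: is_deriveB; apply: is_derive_eq.
  by rewrite /= -[(_)%:A]/(_ * 1) mulr1 expr1 -[K *: _]/(K * _).
have df_le0 (r : R) : r \in `]0, t[ -> derive1 f r <= 0.
  rewrite in_itv /= derive1E => /andP[r_gt0 _]; case: (df r) => _ ->.
  have : dotv (g (x + r *: d) - g x) d <= L * r * sqnorm d.
    apply: dotv_le_sqnorm; first exact: mulr_gt0.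
    rewrite exprMn -mulrA -sqnormZ.
    by have := lipschitz_grad_sqnorm g_lip (x + r *: d) x; rewrite addrAC subrr add0r.
  by rewrite dotvBl -/c /K; nra.
have f_nonincr : {in `[0, t] &, {homo f : r s /~ r <= s}}.
  apply: ler0_derive1_le_cc => [r _ | // | ]; first by case: (df r).
  by apply: derivable_within_continuous => r _; case: (df r).
have := f_nonincr t 0; rewrite !in_itv /= !lexx t_ge0 => /(_ isT isT isT).
have fE r : f r = G (x + r *: d) - c * r - K * (r * r) by [].
rewrite !fE scale0r addr0 !mulr0 !subr0 /K.
have := sqnorm_ge0 d; nra.
Qed.

Lemma armijo_of_lipschitz (x d : 'rV[R]_n) (gamma s : R) : 0 <= s -> L * s <= gamma ->
  G (x + s *: d) <= G x + s * dotv (g x) d + s * (gamma / 2) * sqnorm d.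
Proof.
move=> s_ge0 Ls; have := descent_lemma x d s s_ge0.
have : s * (L * s) * sqnorm d <= s * gamma * sqnorm d.
  by apply: ler_wpM2r; [exact: sqnorm_ge0 | exact: ler_wpM2l].
nra.
Qed.

End DescentLemma.

Lemma backtrack_gt0_lt {R : realFieldType} {tau1 tau2 t t' : R} :
  0 < tau1 -> tau1 < tau2 -> tau2 < 1 -> 0 < t ->
  tau1 * t <= t' <= tau2 * t -> 0 < t' < t.
Proof. by move=> ? ? ? ? /andP[? ?]; apply/andP; split; nra. Qed.

Section LineSearchBound.
Context {R : realType}.
Context {c desc call : R -> Prop} {tau1 tau2 b : R}.
Hypotheses (tau1_gt0 : 0 < tau1) (tau12 : tau1 < tau2) (tau2_lt1 : tau2 < 1).
Hypothesis c_small : forall s : R, 0 < s <= b -> c s.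
Hypothesis call_small : forall s : R, 0 < s <= b -> call s.
Hypothesis call_desc : forall s : R, 0 < s <= 1 -> call s -> desc s.

Let backtrack {t t' : R} : 0 < t <= 1 -> tau1 * t <= t' <= tau2 * t -> 0 < t' <= 1.
Proof.
move=> /andP[t_gt0 t_le1] /(backtrack_gt0_lt tau1_gt0 tau12 tau2_lt1 t_gt0).
by case/andP=> -> /ltW/le_trans->.
Qed.

Let backtrack_min {t t' : R} : b < t -> tau1 * t <= t' -> Num.min 1 (tau1 * b) <= t'.
Proof.
move=> b_lt_t t't1; rewrite ge_min; apply/orP; right.
by apply: le_trans t't1; rewrite ler_pM2l // ltW.
Qed.

Lemma ls_step31_bound (s : R) : ls_step31 c tau1 tau2 s ->
  0 < s <= 1 /\ Num.min 1 (tau1 * b) <= s.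
Proof.
elim=> [|t t' _ [t01 _] not_ct /[dup] t't /andP[t't1 _]].
  by rewrite ltr01 lexx ge_min lexx.
split; first exact: backtrack t01 t't.
apply: backtrack_min t't1; rewrite ltNge; apply/negP => t_le_b; apply: not_ct.
by apply: c_small; case/andP: t01 => ->.
Qed.

Lemma ls_step33_gt (s : R) : ls_step33 c desc call tau1 tau2 s -> 0 < s <= 1 /\ b < s.
Proof.
elim=> [t /ls_step31_bound [t01 _] _ not_desc | t t' _ [t01 _] t't not_call].
  split=> //; rewrite ltNge; apply/negP => t_le_b; apply: not_desc.
  by apply: call_desc => //; apply: call_small; case/andP: t01 => ->.
have t'01 := backtrack t01 t't.
split=> //; rewrite ltNge; apply/negP => t'_le_b; apply: not_call.
by apply: call_small; case/andP: t'01 => ->.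
Qed.

Lemma ls_result_bound (s : R) : ls_result c desc call tau1 tau2 s ->
  0 < s <= 1 /\ Num.min 1 (tau1 * b) <= s.
Proof.
case=> [t /ls_step31_bound // |].
move=> t t' /ls_step33_gt [t01 b_lt_t] /[dup] t't /andP[t't1 _] _.
by split; [exact: backtrack t01 t't | exact: backtrack_min t't1].
Qed.

End LineSearchBound.

Section ConvexExtended.
Context {R : realType} {n : nat}.
Context {h : 'rV[R]_n -> \bar R}.
Hypotheses (h_proper : proper_ext h) (h_convex : convex_ext h).

Lemma proper_ext_fineK {y} : domE h y -> (fine (h y))%:E = h y.
Proof. by move=> y_dom; rewrite fineK //; apply/fin_numPlt; rewrite h_proper.2. Qed.

Lemma convex_ext_segment {x p} {r : R} : domE h x -> domE h p -> 0 <= r <= 1 ->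
  domE h (x + r *: (p - x)) /\
  fine (h (x + r *: (p - x))) <= r * fine (h p) + (1 - r) * fine (h x).
Proof.
move=> x_dom p_dom r01; have := h_convex p x r p_dom x_dom r01.
have -> : r *: p + (1 - r) *: x = x + r *: (p - x).
  by rewrite scalerBl scale1r scalerBr addrCA addrC.
move=> hle; have y_dom : domE h (x + r *: (p - x)) := le_lt_trans hle (ltry _).
by split=> //; rewrite -lee_fin proper_ext_fineK.
Qed.

End ConvexExtended.

Definition lin_gap {R : realType} {n m : nat}
  (gradG : 'I_m -> 'rV[R]_n -> 'rV[R]_n) (H : 'I_m -> 'rV[R]_n -> \bar R)
  (x u : 'rV[R]_n) (j : 'I_m) : R :=
  dotv (gradG j x) (u - x) + fine (H j u) - fine (H j x).

Section ProximalPoint.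
Context {R : realType} {n m : nat}.
Context {gradG : 'I_m -> 'rV[R]_n -> 'rV[R]_n} {H : 'I_m -> 'rV[R]_n -> \bar R}.
Context {alpha : R} {x p : 'rV[R]_n}.
Hypothesis H_proper : forall j, proper_ext (H j).
Hypothesis H_convex : forall j, convex_ext (H j).
Hypotheses (x_dom : domF H x) (p_prox : is_prox gradG H alpha x p).
Hypothesis alpha_gt0 : 0 < alpha.

Let q := sqnorm (p - x) / (2 * alpha).

Let q_ge0 : 0 <= q.
Proof. by rewrite divr_ge0 ?sqnorm_ge0 // mulr_ge0 // ltW. Qed.

Let fineH u j : (H j u < +oo)%E -> (fine (H j u))%:E = H j u.
Proof. exact: proper_ext_fineK. Qed.

Let psi_term_le u j :
  ((dotv (gradG j x) (u - x))%:E + H j u - H j x <= psi gradG H x u)%E.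
Proof. by rewrite /psi; apply: le_bigmax. Qed.

Let psi_termE u j : (H j u < +oo)%E ->
  ((dotv (gradG j x) (u - x))%:E + H j u - H j x)%E = (lin_gap gradG H x u j)%:E.
Proof. by move=> u_dom; rewrite /lin_gap EFinB EFinD !fineH. Qed.

Lemma lin_gap_le_psi u j : domF H u -> ((lin_gap gradG H x u j)%:E <= psi gradG H x u)%E.
Proof. by move=> u_dom; rewrite -psi_termE. Qed.

Lemma psi_self_le0 : (psi gradG H x x <= 0)%E.
Proof.
apply: bigmax_le => [|j _]; first exact: leNye.
by rewrite subrr dotv0r -(fineH _ _ (x_dom j)) add0e -EFinB subrr.
Qed.

Lemma prox_obj_le0 : (prox_obj gradG H alpha x p <= 0)%E.
Proof.
apply: le_trans (p_prox x) _.
by rewrite /prox_obj subrr /sqnorm dotv0r mul0r adde0 psi_self_le0.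
Qed.

Lemma prox_domF : domF H p.
Proof.
move=> j; rewrite ltey; apply/negP => /eqP Hp_oo.
have psi_oo : psi gradG H x p = +oo%E.
  apply/eqP; rewrite -leye_eq; apply: le_trans (psi_term_le p j).
  by rewrite Hp_oo -(fineH _ _ (x_dom j)).
by have := prox_obj_le0; rewrite /prox_obj psi_oo.
Qed.

Lemma psi_segment_le (r : R) : 0 <= r <= 1 ->
  (psi gradG H x (x + r *: (p - x)) <= r%:E * psi gradG H x p)%E.
Proof.
move=> r01; apply: bigmax_le => [|j _]; first exact: leNye.
have [u_dom u_le] :=
  convex_ext_segment (H_proper j) (H_convex j) (x_dom j) (prox_domF j) r01.
have r_ge0 : (0 <= r%:E)%E by rewrite lee_fin; case/andP: r01.
apply: le_trans (lee_wpmul2l r_ge0 (lin_gap_le_psi p j prox_domF)).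
rewrite psi_termE // -EFinM lee_fin /lin_gap.
have -> : x + r *: (p - x) - x = r *: (p - x) by rewrite addrC addKr.
by rewrite dotvZr; lra.
Qed.

Lemma lin_gap_prox_le (r : R) j : 0 <= r < 1 -> lin_gap gradG H x p j <= - (1 + r) * q.
Proof.
move=> /andP[r_ge0 r_lt1]; set A := fine (psi gradG H x p).
have gap_le_psi := lin_gap_le_psi p j prox_domF.
have psi_le0 : (psi gradG H x p <= 0)%E.
  by apply: le_trans prox_obj_le0; apply: leeDl; rewrite lee_fin.
have psiE : psi gradG H x p = A%:E.
  rewrite fineK //; apply/fin_numPlt.
  by rewrite (lt_le_trans (ltNyr _) gap_le_psi) (le_lt_trans psi_le0 (ltry _)).
have gap_le_A : lin_gap gradG H x p j <= A by rewrite -lee_fin -psiE.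
have r01 : 0 <= r <= 1 by rewrite r_ge0 ltW.
have := le_trans (p_prox (x + r *: (p - x))) (leeD2r _ (psi_segment_le r r01)).
rewrite /prox_obj psiE -!EFinM -!EFinD lee_fin -/q.
have -> : x + r *: (p - x) - x = r *: (p - x) by rewrite addrC addKr.
rewrite sqnormZ -mulrA -/q => prox_ineq.
nra.
Qed.

Lemma lin_gap_prox_step_le (gamma : R) j : 0 <= gamma < 2 / alpha ->
  lin_gap gradG H x p j + gamma / 2 * sqnorm (p - x) <= 0.
Proof.
rewrite ltr_pdivlMr // => /andP[gamma_ge0 gamma_lt2].
set r := gamma * alpha / 2.
have r_ge0 : 0 <= r by rewrite divr_ge0 // mulr_ge0 // ltW.
have r_lt1 : r < 1 by rewrite /r ltr_pdivrMr // mul1r.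
have := lin_gap_prox_le r j; rewrite r_ge0 r_lt1 => /(_ isT).
have -> : gamma / 2 * sqnorm (p - x) = 2 * r * q.
  by rewrite /r /q; field; rewrite gt_eqF.
have : 0 <= (1 - r) * q by rewrite mulr_ge0 // subr_ge0 ltW.
lra.
Qed.

Lemma armijo_F_le {G : 'I_m -> 'rV[R]_n -> R} (gamma s : R) :
  0 <= gamma < 2 / alpha -> 0 < s <= 1 ->
  (forall j, armijo G gradG gamma j x (p - x) s) -> F_le G H (x + s *: (p - x)) x.
Proof.
move=> gamma_bd /andP[s_gt0 s_le1] arm j.
have s01 : 0 <= s <= 1 by rewrite ltW.
have [y_dom y_le] :=
  convex_ext_segment (H_proper j) (H_convex j) (x_dom j) (prox_domF j) s01.
rewrite /Fj -(fineH _ _ y_dom) -(fineH _ _ (x_dom j)) -!EFinD lee_fin.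
have := lin_gap_prox_step_le _ j gamma_bd; have := arm j; rewrite /armijo /lin_gap.
nra.
Qed.

End ProximalPoint.

Lemma Lmax_ge {R : realType} {m : nat} (L : 'I_m -> R) j : L j <= Lmax L.
Proof. exact: (le_bigmax_cond _ (fun j => L j)). Qed.

Section MPGStepSize.
Context {R : realType} {n m : nat}.
Context {G : 'I_m -> 'rV[R]_n -> R} {gradG : 'I_m -> 'rV[R]_n -> 'rV[R]_n}.
Context {H : 'I_m -> 'rV[R]_n -> \bar R} {alpha gamma tau1 tau2 : R} {L : 'I_m -> R}.
Context {x p : nat -> 'rV[R]_n} {t : nat -> R} {jstar : nat -> 'I_m}.
Hypotheses (m_gt0 : (0 < m)%N) (setting : composite_setting G gradG H).
Hypothesis L_lip : forall j, 0 < L j /\ lipschitz_grad (gradG j) (L j).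
Hypothesis mpg : MPG_sequence G gradG H alpha gamma tau1 tau2 x p t jstar.

Let H_proper j : proper_ext (H j). Proof. by case: setting => _ /(_ j) []. Qed.
Let H_convex j : convex_ext (H j). Proof. by case: setting => _ /(_ j) [_ []]. Qed.

Let Lmax_gt0 : 0 < Lmax L.
Proof. exact: lt_le_trans (L_lip (Ordinal m_gt0)).1 (Lmax_ge _ _). Qed.

Lemma MPG_armijo_small k j s : 0 < s <= gamma / Lmax L ->
  armijo G gradG gamma j (x k) (p k - x k) s.
Proof.
move=> /andP[s_gt0 s_le]; have [Lj_gt0 Lj_lip] := L_lip j.
have [/(_ j) [G_grad _] _ _ _] := setting.
apply: (armijo_of_lipschitz G_grad Lj_gt0 Lj_lip); first exact: ltW.
apply: (@le_trans _ _ (Lmax L * s)).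
  by apply: ler_wpM2r; [exact: ltW | exact: Lmax_ge].
by rewrite mulrC -ler_pdivlMr.
Qed.

Lemma MPG_step_bound k : reached gradG H alpha x p k -> domF H (x k) ->
  theta gradG H alpha (x k) (p k) <> 0%E ->
  0 < t k <= 1 /\ Num.min 1 (tau1 * (gamma / Lmax L)) <= t k.
Proof.
move=> k_reached xk_dom theta_neq0.
have [[_ alpha_gt0 /andP[gamma_gt0 gamma_lt] tau_bounds] steps] := mpg.
have /andP[tau1_gt0 /andP[tau12 tau2_lt1]] := tau_bounds.
have [p_prox /(_ theta_neq0) [_ ls _]] := steps k k_reached.
apply: (ls_result_bound tau1_gt0 tau12 tau2_lt1 _ _ _ _ ls).
- by move=> s s_small; apply: MPG_armijo_small.
- by move=> s s_small j; apply: MPG_armijo_small.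
- move=> s s01; apply: (armijo_F_le H_proper H_convex xk_dom p_prox alpha_gt0) => //.
  by rewrite (ltW gamma_gt0) gamma_lt.
Qed.

Lemma MPG_domF k : reached gradG H alpha x p k -> domF H (x k).
Proof.
elim: k => [_ | k IH k1_reached]; first by case: mpg => [[]].
have k_reached : reached gradG H alpha x p k.
  by move=> i i_lt_k; apply: k1_reached; exact: ltnW.
have theta_neq0 := k1_reached k (ltnSn k).
have xk_dom := IH k_reached.
have [t01 _] := MPG_step_bound k k_reached xk_dom theta_neq0.
have [p_prox /(_ theta_neq0) [_ _ ->]] := mpg.2 k k_reached.
have pk_dom := prox_domF H_proper xk_dom p_prox.
have t01' : 0 <= t k <= 1 by case/andP: t01 => /ltW ->.
move=> j.
by have [] := convex_ext_segment (H_proper j) (H_convex j) (xk_dom j) (pk_dom j) t01'.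
Qed.

End MPGStepSize.

Theorem mainTheorem5 (R : realType) (n m : nat)
  (G : 'I_m -> 'rV[R]_n -> R) (gradG : 'I_m -> 'rV[R]_n -> 'rV[R]_n)
  (H : 'I_m -> 'rV[R]_n -> \bar R) (alpha gamma tau1 tau2 : R)
  (L : 'I_m -> R)
  (x p : nat -> 'rV[R]_n) (t : nat -> R) (jstar : nat -> 'I_m) :
  (0 < m)%N ->
  composite_setting G gradG H ->
  (forall j, 0 < L j /\ lipschitz_grad (gradG j) (L j)) ->
  MPG_sequence G gradG H alpha gamma tau1 tau2 x p t jstar ->
  forall k, reached gradG H alpha x p k ->
    theta gradG H alpha (x k) (p k) <> 0%E ->
    Num.min 1 (tau1 * gamma / Lmax L) <= t k.
Proof.
move=> m_gt0 setting L_lip mpg k k_reached theta_neq0.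
have xk_dom := MPG_domF m_gt0 setting L_lip mpg k k_reached.
have [_ t_ge] := MPG_step_bound m_gt0 setting L_lip mpg k k_reached xk_dom theta_neq0.
by rewrite -mulrA.
Qed.
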